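(* Let $a$ be a real number with $a\ge 3$ and let $k\in\mathbb{N}$. Then $$\frac{2\cdot(2k)!}{\pi^{2k}(2^{2k}-1)}\,\frac{a^{2k}}{a^{2k}-1} < |B_{2k}|.$$
   Context: $B_n$ denotes the Bernoulli numbers, defined by $\frac{x}{e^x-1}=\sum_{n=0}^\infty B_n \frac{x^n}{n!}$ for $|x|<2\pi$. $\mathbb{N}=\{1,2,3,\dots\}$. *)

From Stdlib Require Import Reals Lra.
From Coquelicot Require Import Coquelicot.
Open Scope R_scope.

(* The generating function x / (e^x - 1), extended continuously (indeed
   analytically) at 0 by its limit value 1. *)
Definition bern_gen (x : R) : R :=
  if Req_EM_T x 0 then 1 else x / (exp x - 1).

(* Bernoulli numbers: x/(e^x-1) = sum_n B_n x^n / n!  for |x| < 2 pi,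
   i.e. B_n is n! times the n-th Taylor coefficient at 0, which is the
   n-th derivative of the generating function at 0. *)
Definition bernoulli (n : nat) : R := Derive_n bern_gen n 0.

(** With [c_n = B_n / n!] and [Q_n(x) = B_n(x) / n!] one has [Q_(n+1)' = Q_n], [Q_n(0) = c_n]
    and [Q_n(1) = Q_n(0)] for [n >= 2].  Repeated integration by parts then gives
    [∫_0^1 Q_k^2 = (-1)^(k-1) c_(2k)], and shows that the Fourier coefficients of [Q_k] at the
    frequency [2πm] have squared norm [(2πm)^(-2k)].  Bessel's inequality for the first eight
    frequencies yields [|B_(2k)| >= 2 (2k)! (2π)^(-2k) Σ_(m<=8) m^(-2k)], and this partial sum
    of [ζ(2k)] already exceeds the Euler factor [(1 - 2^(-2k))^(-1) (1 - 3^(-2k))^(-1)], while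
    [a^(2k) / (a^(2k) - 1) <= (1 - 3^(-2k))^(-1)] for [a >= 3]. *)

From Stdlib Require Import Reals.
From Coquelicot Require Import Coquelicot.
Open Scope R_scope.
From Stdlib Require Import Lra Lia Factorial.

(** * Taylor coefficients of [x / (e^x - 1)] *)

(* [bern_coef_table n j = bern_coef j] for [j <= n]: a course-of-values table for the
   recursion [Σ_(j<=m) c_j / (m+1-j)! = 0] ([m >= 1]), which says that [Σ c_n x^n] inverts
   [(e^x - 1) / x = Σ x^n / (n+1)!]. *)
Fixpoint bern_coef_table (n : nat) : nat -> R :=
  match n with
  | O => fun _ => 1
  | S n' => fun j =>
      if Nat.leb j n' then bern_coef_table n' j
      else - sum_f_R0 (fun i => bern_coef_table n' i / INR (fact (S n - i))) n'
  end.

Definition bern_coef (n : nat) : R := bern_coef_table n n.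

Lemma bern_coef_table_stable n j : (j <= n)%nat -> bern_coef_table n j = bern_coef j.
Proof.
  induction n as [|n IH]; intros Hj.
  - replace j with 0%nat by lia. reflexivity.
  - destruct (Nat.eq_dec j (S n)) as [->|Hne]; [reflexivity|].
    simpl. rewrite (proj2 (Nat.leb_le j n)) by lia. apply IH. lia.
Qed.

Lemma bern_coef_0 : bern_coef 0 = 1.
Proof. reflexivity. Qed.

Lemma bern_coef_S n :
  bern_coef (S n) = - sum_f_R0 (fun i => bern_coef i / INR (fact (S (S n) - i))) n.
Proof.
  unfold bern_coef at 1. cbn [bern_coef_table].
  rewrite (proj2 (Nat.leb_gt (S n) n)) by lia.
  f_equal. apply sum_eq. intros i Hi. rewrite bern_coef_table_stable by lia. reflexivity.
Qed.

Lemma bern_coef_convolution m : (1 <= m)%nat ->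
  sum_f_R0 (fun j => bern_coef j / INR (fact (S m - j))) m = 0.
Proof.
  intros Hm. destruct m as [|n]; [lia|].
  rewrite tech5, bern_coef_S, Nat.sub_succ_l, Nat.sub_diag by lia.
  change (INR (fact 1)) with 1. lra.
Qed.

Lemma pow2_le_fact n : (2 ^ n <= fact (S n))%nat.
Proof. induction n; simpl in *; lia. Qed.

Lemma sum_inv_fact_le n :
  sum_f_R0 (fun i => / INR (fact (S (S n) - i))) n <= 1 - / 2 ^ S n.
Proof.
  induction n as [|n IH]; [simpl; lra|].
  rewrite decomp_sum by lia. simpl pred. rewrite Nat.sub_0_r.
  assert (Hfact : 2 ^ S (S n) <= INR (fact (S (S (S n))))).
  { replace (2 ^ S (S n)) with (INR (2 ^ S (S n))) by (rewrite pow_INR; reflexivity).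
    apply le_INR, pow2_le_fact. }
  assert (H2 : 0 < 2 ^ S n) by (apply pow_lt; lra).
  assert (Hinv : / INR (fact (S (S (S n)))) <= / 2 ^ S (S n))
    by (apply Rinv_le_contravar; [apply pow_lt|]; lra).
  assert (Ehalf : / 2 ^ S (S n) = / 2 ^ S n / 2)
    by (rewrite <- tech_pow_Rmult; field; lra).
  change (sum_f_R0 (fun i => / INR (fact (S (S (S n)) - S i))) n)
    with (sum_f_R0 (fun i => / INR (fact (S (S n) - i))) n).
  lra.
Qed.

Lemma Rabs_bern_coef_le n : Rabs (bern_coef n) <= 1.
Proof.
  induction n as [n IH] using (well_founded_induction Wf_nat.lt_wf).
  destruct n as [|n]; [rewrite bern_coef_0, Rabs_R1; lra|].
  rewrite bern_coef_S, Rabs_Ropp.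
  assert (Hterm : sum_f_R0 (fun i => Rabs (bern_coef i / INR (fact (S (S n) - i)))) n
                  <= sum_f_R0 (fun i => / INR (fact (S (S n) - i))) n).
  { apply sum_Rle. intros i Hi.
    assert (Hf : 0 < INR (fact (S (S n) - i))) by apply INR_fact_lt_0.
    unfold Rdiv. rewrite Rabs_mult, Rabs_inv, (Rabs_pos_eq (INR _)) by lra.
    rewrite <- (Rmult_1_l (/ INR _)) at 2.
    apply Rmult_le_compat_r; [apply Rlt_le, Rinv_0_lt_compat; lra|].
    apply IH. lia. }
  assert (Hpow : 0 < / 2 ^ S n) by (apply Rinv_0_lt_compat, pow_lt; lra).
  pose proof (Rsum_abs (fun i => bern_coef i / INR (fact (S (S n) - i))) n).
  pose proof (sum_inv_fact_le n).
  lra.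
Qed.

Lemma CV_radius_ge_1 (a : nat -> R) : (forall n, Rabs (a n) <= 1) -> Rbar_le 1 (CV_radius a).
Proof.
  intros Ha. apply (proj1 (CV_radius_bounded a)).
  exists 1. intros n. rewrite pow1, Rmult_1_r. apply Ha.
Qed.

Lemma Rabs_lt_CV_radius (a : nat -> R) x :
  (forall n, Rabs (a n) <= 1) -> Rabs x < 1 -> Rbar_lt (Rabs x) (CV_radius a).
Proof.
  intros Ha Hx. generalize (CV_radius_ge_1 a Ha). destruct (CV_radius a); simpl; lra.
Qed.

Lemma PS_mult_bern_coef n :
  PS_mult bern_coef (fun i => / INR (fact (S i))) n = if Nat.eqb n 0 then 1 else 0.
Proof.
  destruct n as [|m].
  - cbv [PS_mult sum_f_R0]. rewrite bern_coef_0. simpl. lra.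
  - rewrite <- (bern_coef_convolution (S m)) by lia.
    apply sum_eq. intros i Hi. unfold Rdiv. do 4 f_equal. lia.
Qed.

Lemma bern_gen_PSeries x : Rabs x < 1 -> bern_gen x = PSeries bern_coef x.
Proof.
  intros Hx. unfold bern_gen. destruct (Req_EM_T x 0) as [->|Hx0].
  { rewrite PSeries_0, bern_coef_0. reflexivity. }
  set (e := fun i => / INR (fact (S i))).
  assert (He_le : forall n, Rabs (e n) <= 1).
  { intros n. unfold e. rewrite Rabs_pos_eq by (apply Rlt_le, Rinv_0_lt_compat, INR_fact_lt_0).
    rewrite <- Rinv_1. apply Rinv_le_contravar; [lra|].
    apply (le_INR 1), lt_O_fact. }
  assert (Hc := Rabs_lt_CV_radius bern_coef x Rabs_bern_coef_le Hx).
  assert (Hd := Rabs_lt_CV_radius e x He_le Hx).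
  assert (Hprod : PSeries (PS_mult bern_coef e) x = 1).
  { rewrite PSeries_decr_1 by (apply ex_pseries_mult; auto).
    rewrite (PSeries_ext (PS_decr_1 (PS_mult bern_coef e)) (fun _ => 0)).
    - rewrite PSeries_const_0, PS_mult_bern_coef. simpl. ring.
    - intros n. unfold PS_decr_1. rewrite PS_mult_bern_coef. reflexivity. }
  assert (He : PSeries e x = (exp x - 1) / x).
  { assert (Hinv : mult (/ x) x = one) by (apply Rinv_l; auto).
    change (PSeries (PS_decr_1 (fun n => / INR (fact n))) x = (exp x - 1) / x).
    rewrite (is_pseries_unique _ _ _ (is_pseries_decr_1 _ x (/ x) _ Hinv (is_exp_Reals x))).
    change (/ x * (exp x + - / 1) = (exp x - 1) / x). field. auto. }
  assert (Hexp : exp x - 1 <> 0).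
  { intros E. apply Hx0, exp_inv. rewrite exp_0. lra. }
  rewrite PSeries_mult, He in Hprod by auto.
  apply (Rmult_eq_reg_r ((exp x - 1) / x)).
  - rewrite Hprod. field. auto.
  - unfold Rdiv. apply Rmult_integral_contrapositive. split; [|apply Rinv_neq_0_compat]; auto.
Qed.

Lemma bernoulli_bern_coef n : bernoulli n = INR (fact n) * bern_coef n.
Proof.
  unfold bernoulli. rewrite (Derive_n_ext_loc _ (PSeries bern_coef)).
  - rewrite Derive_n_PSeries.
    + rewrite PSeries_0. unfold PS_derive_n. simpl. rewrite Rdiv_1_r. reflexivity.
    + apply Rabs_lt_CV_radius; [apply Rabs_bern_coef_le|]. rewrite Rabs_R0. lra.
  - exists (mkposreal 1 Rlt_0_1). intros y Hy. apply bern_gen_PSeries.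
    change (Rabs (y - 0) < 1) in Hy. rewrite Rminus_0_r in Hy. exact Hy.
Qed.

Lemma is_derive_sum_f_R0 (f : nat -> R -> R) (df : nat -> R) n x :
  (forall i, (i <= n)%nat -> is_derive (f i) x (df i)) ->
  is_derive (fun y => sum_f_R0 (fun i => f i y) n) x (sum_f_R0 df n).
Proof.
  induction n as [|n IH]; intros Hf; simpl.
  - apply Hf. lia.
  - apply (is_derive_plus (fun y => sum_f_R0 (fun i => f i y) n) (f (S n))).
    + apply IH. intros i Hi. apply Hf. lia.
    + apply Hf. lia.
Qed.

Lemma is_RInt_sum_f_R0 (f : nat -> R -> R) (I : nat -> R) a b n :
  (forall i, (i <= n)%nat -> is_RInt (f i) a b (I i)) ->
  is_RInt (fun x => sum_f_R0 (fun i => f i x) n) a b (sum_f_R0 I n).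
Proof.
  induction n as [|n IH]; intros Hf; simpl.
  - apply Hf. lia.
  - apply (is_RInt_plus (fun x => sum_f_R0 (fun i => f i x) n) (f (S n))).
    + apply IH. intros i Hi. apply Hf. lia.
    + apply Hf. lia.
Qed.

Lemma is_RInt_Rmult_l (f : R -> R) (a b c I : R) :
  is_RInt f a b I -> is_RInt (fun x => c * f x) a b (c * I).
Proof. exact (is_RInt_scal f a b c I). Qed.

Lemma is_RInt_Rplus (f g : R -> R) (a b I J : R) :
  is_RInt f a b I -> is_RInt g a b J -> is_RInt (fun x => f x + g x) a b (I + J).
Proof. exact (is_RInt_plus f g a b I J). Qed.

Lemma is_RInt_parts (F f G g : R -> R) (I : R) :
  (forall x, is_derive F x (f x)) -> (forall x, is_derive G x (g x)) ->
  (forall x, continuous f x) -> (forall x, continuous g x) ->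
  is_RInt (fun x => f x * G x) 0 1 I ->
  is_RInt (fun x => F x * g x) 0 1 (F 1 * G 1 - F 0 * G 0 - I).
Proof.
  intros dF dG cf cg HI.
  exact (is_RInt_scal_derive_r F G f g 0 1 I (fun x _ => dF x) (fun x _ => dG x)
           (fun x _ => cf x) (fun x _ => cg x) HI).
Qed.

Lemma is_RInt_ext_eq (f g : R -> R) (a b I J : R) :
  is_RInt f a b I -> (forall x, f x = g x) -> I = J -> is_RInt g a b J.
Proof. intros HI Hfg <-. apply (is_RInt_ext f); [intros x _; apply Hfg | exact HI]. Qed.

(** * Bernoulli polynomials *)

Definition pow_fact (m : nat) (x : R) : R := x ^ m / INR (fact m).

(* [bern_poly n x = B_n(x) / n!]. *)
Definition bern_poly (n : nat) (x : R) : R :=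
  sum_f_R0 (fun j => bern_coef j * pow_fact (n - j) x) n.

Lemma is_derive_pow_fact m x : is_derive (pow_fact (S m)) x (pow_fact m x).
Proof.
  unfold pow_fact. auto_derive; [exact I|].
  change (match m with 0%nat => 1 | S _ => INR m + 1 end) with (INR (S m)).
  rewrite plus_INR, mult_INR, S_INR.
  assert (0 < INR (fact m)) by apply INR_fact_lt_0.
  assert (0 <= INR m) by apply pos_INR.
  field. nra.
Qed.

Lemma bern_poly_0 x : bern_poly 0 x = 1.
Proof. unfold bern_poly, pow_fact. simpl. rewrite bern_coef_0. field. Qed.

Lemma bern_poly_1 x : bern_poly 1 x = x - / 2.
Proof.
  unfold bern_poly, pow_fact. simpl.
  rewrite bern_coef_S. simpl. rewrite bern_coef_0. field.
Qed.

Lemma bern_poly_at_0 n : bern_poly n 0 = bern_coef n.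
Proof.
  unfold bern_poly. destruct n as [|n]; [unfold pow_fact; simpl; field|].
  rewrite tech5, sum_eq_R0.
  - rewrite Nat.sub_diag. unfold pow_fact. simpl. field.
  - intros j Hj. unfold pow_fact. rewrite pow_i by lia. unfold Rdiv. ring.
Qed.

Lemma bern_poly_at_1 n : (2 <= n)%nat -> bern_poly n 1 = bern_coef n.
Proof.
  intros Hn. destruct n as [|m]; [lia|].
  unfold bern_poly. rewrite tech5, Nat.sub_diag.
  assert (Hsum : sum_f_R0 (fun j => bern_coef j * pow_fact (S m - j) 1) m = 0).
  { rewrite <- (bern_coef_convolution m) by lia. apply sum_eq. intros j _.
    unfold pow_fact. rewrite pow1. unfold Rdiv. ring. }
  rewrite Hsum. unfold pow_fact. simpl. field.
Qed.

Lemma is_derive_bern_poly n x : is_derive (bern_poly (S n)) x (bern_poly n x).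
Proof.
  apply (is_derive_ext (fun y => sum_f_R0 (fun j => bern_coef j * pow_fact (S (n - j)) y) n
                                 + bern_coef (S n) * pow_fact 0 y)).
  { intros y. unfold bern_poly. rewrite tech5, Nat.sub_diag. f_equal.
    apply sum_eq. intros j Hj. do 3 f_equal. lia. }
  rewrite <- (Rplus_0_r (bern_poly n x)).
  apply (is_derive_plus (fun y => sum_f_R0 _ n) (fun y => bern_coef (S n) * pow_fact 0 y)).
  - apply (is_derive_sum_f_R0 (fun j y => bern_coef j * pow_fact (S (n - j)) y)).
    intros j _. apply (is_derive_scal (pow_fact _)), is_derive_pow_fact.
  - unfold pow_fact. auto_derive; [exact I|]. ring.
Qed.

Lemma continuous_bern_poly n x : continuous (bern_poly n) x.
Proof.
  apply (@ex_derive_continuous R_AbsRing R_NormedModule).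
  destruct n as [|n].
  - exists 0. apply (is_derive_ext (fun _ => 1)); [intros; now rewrite bern_poly_0|].
    auto_derive; [exact I | reflexivity].
  - exists (bern_poly n x). apply is_derive_bern_poly.
Qed.

Lemma is_RInt_bern_poly n : is_RInt (bern_poly (S n)) 0 1 0.
Proof.
  eapply is_RInt_ext_eq; [| reflexivity |].
  - apply (is_RInt_derive (bern_poly (S (S n)))); intros x _;
      [apply is_derive_bern_poly | apply continuous_bern_poly].
  - rewrite bern_poly_at_1, bern_poly_at_0 by lia. apply Rminus_diag.
Qed.

Lemma is_RInt_bern_poly_mul q p : (1 <= p)%nat ->
  is_RInt (fun x => bern_poly (S q) x * bern_poly p x) 0 1 ((-1) ^ q * bern_coef (p + S q)).
Proof.
  revert p. induction q as [|q IH]; intros p Hp.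
  - assert (H0 : is_RInt (fun x => bern_poly 0 x * bern_poly (S p) x) 0 1 0).
    { eapply is_RInt_ext_eq; [apply (is_RInt_bern_poly p) | | reflexivity].
      intros x. rewrite bern_poly_0. ring. }
    eapply is_RInt_ext_eq; [| reflexivity |].
    + exact (is_RInt_parts _ _ _ _ _ (is_derive_bern_poly 0) (is_derive_bern_poly p)
               (continuous_bern_poly 0) (continuous_bern_poly p) H0).
    + rewrite !bern_poly_1, bern_poly_at_1, bern_poly_at_0, Nat.add_1_r by lia. ring.
  - eapply is_RInt_ext_eq; [| reflexivity |].
    + exact (is_RInt_parts _ _ _ _ _ (is_derive_bern_poly (S q)) (is_derive_bern_poly p)
               (continuous_bern_poly (S q)) (continuous_bern_poly p) (IH (S p) ltac:(lia))).
    + rewrite !bern_poly_at_1, !bern_poly_at_0, !Nat.add_succ_r by lia. simpl. ring.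
Qed.

(** * Harmonics and Fourier coefficients *)

Definition harmonic (alpha beta w x : R) : R := alpha * cos (w * x) + beta * sin (w * x).

Lemma harmonic_quadrature alpha beta gamma delta w x :
  harmonic alpha beta w x * harmonic gamma delta w x
  + harmonic beta (- alpha) w x * harmonic delta (- gamma) w x = alpha * gamma + beta * delta.
Proof.
  transitivity ((alpha * gamma + beta * delta) * (sin (w * x) ^ 2 + cos (w * x) ^ 2)).
  - unfold harmonic. ring.
  - rewrite <- !Rsqr_pow2, sin2_cos2. ring.
Qed.

Lemma harmonic_periodic alpha beta w : sin w = 0 -> cos w = 1 ->
  harmonic alpha beta w 1 = harmonic alpha beta w 0.
Proof. intros sw cw. unfold harmonic. rewrite Rmult_1_r, Rmult_0_r, sw, cw, sin_0, cos_0. ring. Qed.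

Section PeriodicHarmonics.

Variables a b : R.
Hypotheses (sin_a : sin a = 0) (cos_a : cos a = 1) (sin_b : sin b = 0) (cos_b : cos b = 1).

Lemma is_RInt_harmonic_mul_orth alpha beta gamma delta : a * a <> b * b ->
  is_RInt (fun x => harmonic alpha beta a x * harmonic gamma delta b x) 0 1 0.
Proof.
  intros Hab.
  (* The derivative of a harmonic of frequency [a] is [a] times its quadrature partner. *)
  set (F x := (b * harmonic alpha beta a x * harmonic delta (- gamma) b x
               - a * harmonic beta (- alpha) a x * harmonic gamma delta b x) / (a * a - b * b)).
  eapply is_RInt_ext_eq; [| reflexivity |].
  - apply (is_RInt_derive F); intros x _.
    + unfold F, harmonic. auto_derive; [exact I|]. field. lra.
    + apply (@ex_derive_continuous R_AbsRing R_NormedModule). unfold harmonic. auto_derive. exact I.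
  - unfold F. rewrite !(harmonic_periodic _ _ a), !(harmonic_periodic _ _ b) by assumption.
    apply Rminus_diag.
Qed.

Lemma is_RInt_harmonic_mul_same alpha beta gamma delta : a <> 0 ->
  is_RInt (fun x => harmonic alpha beta a x * harmonic gamma delta a x) 0 1
    ((alpha * gamma + beta * delta) / 2).
Proof.
  intros Ha.
  set (F x := (alpha * gamma + beta * delta) * x / 2
              - harmonic alpha beta a x * harmonic delta (- gamma) a x / (2 * a)).
  eapply is_RInt_ext_eq; [| reflexivity |].
  - apply (is_RInt_derive F); intros x _.
    + pose proof (harmonic_quadrature alpha beta gamma delta a x) as Hq.
      unfold F, harmonic in *. auto_derive; [exact I|]. rewrite <- Hq. field. exact Ha.
    + apply (@ex_derive_continuous R_AbsRing R_NormedModule). unfold harmonic. auto_derive. exact I.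
  - unfold F. rewrite !(harmonic_periodic _ _ a) by assumption.
    unfold minus, plus, opp. simpl. field. exact Ha.
Qed.

End PeriodicHarmonics.

Definition fourier_cos (f : R -> R) (w : R) : R := RInt (fun x => f x * cos (w * x)) 0 1.
Definition fourier_sin (f : R -> R) (w : R) : R := RInt (fun x => f x * sin (w * x)) 0 1.

Section FourierCoefficients.

Variable w : R.
Hypotheses (w_neq0 : w <> 0) (sin_w : sin w = 0) (cos_w : cos w = 1).

Lemma continuous_mul_cos (f : R -> R) x :
  continuous f x -> continuous (fun y => f y * cos (w * y)) x.
Proof.
  intros Hf. apply (continuous_mult f (fun y => cos (w * y))); [exact Hf|].
  apply (@ex_derive_continuous R_AbsRing R_NormedModule). auto_derive. exact I.
Qed.

Lemma continuous_mul_sin (f : R -> R) x :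
  continuous f x -> continuous (fun y => f y * sin (w * y)) x.
Proof.
  intros Hf. apply (continuous_mult f (fun y => sin (w * y))); [exact Hf|].
  apply (@ex_derive_continuous R_AbsRing R_NormedModule). auto_derive. exact I.
Qed.

Lemma is_RInt_fourier_cos (f : R -> R) :
  (forall x, continuous f x) -> is_RInt (fun x => f x * cos (w * x)) 0 1 (fourier_cos f w).
Proof.
  intros Hf. unfold fourier_cos.
  apply (@RInt_correct R_CompleteNormedModule), ex_RInt_continuous.
  intros x _. now apply continuous_mul_cos.
Qed.

Lemma is_RInt_fourier_sin (f : R -> R) :
  (forall x, continuous f x) -> is_RInt (fun x => f x * sin (w * x)) 0 1 (fourier_sin f w).
Proof.
  intros Hf. unfold fourier_sin.
  apply (@RInt_correct R_CompleteNormedModule), ex_RInt_continuous.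
  intros x _. now apply continuous_mul_sin.
Qed.

Section Antiderivative.

Variables F f : R -> R.
Hypotheses (F_derive : forall x, is_derive F x (f x)) (f_cont : forall x, continuous f x).

Lemma fourier_cos_antiderivative : fourier_cos F w = - fourier_sin f w / w.
Proof.
  assert (Hsin : is_RInt (fun x => f x * (sin (w * x) / w)) 0 1 (/ w * fourier_sin f w)).
  { eapply is_RInt_ext_eq; [apply is_RInt_Rmult_l, (is_RInt_fourier_sin f f_cont) | | reflexivity].
    intros x. simpl. field. exact w_neq0. }
  apply is_RInt_unique.
  eapply is_RInt_ext_eq; [| reflexivity |].
  - apply (is_RInt_parts F f (fun x => sin (w * x) / w) (fun x => cos (w * x))
              (/ w * fourier_sin f w) F_derive); auto.
    + intros x. auto_derive; [exact I|]. field. exact w_neq0.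
    + intros x. apply (@ex_derive_continuous R_AbsRing R_NormedModule). auto_derive. exact I.
  - rewrite Rmult_1_r, Rmult_0_r, sin_w, sin_0. field. exact w_neq0.
Qed.

Lemma fourier_sin_antiderivative :
  fourier_sin F w = (fourier_cos f w - (F 1 - F 0)) / w.
Proof.
  assert (Hcos : is_RInt (fun x => f x * (- cos (w * x) / w)) 0 1 (- / w * fourier_cos f w)).
  { eapply is_RInt_ext_eq; [apply is_RInt_Rmult_l, (is_RInt_fourier_cos f f_cont) | | reflexivity].
    intros x. simpl. field. exact w_neq0. }
  apply is_RInt_unique.
  eapply is_RInt_ext_eq; [| reflexivity |].
  - apply (is_RInt_parts F f (fun x => - cos (w * x) / w) (fun x => sin (w * x))
              (- / w * fourier_cos f w) F_derive); auto.
    + intros x. auto_derive; [exact I|]. field. exact w_neq0.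
    + intros x. apply (@ex_derive_continuous R_AbsRing R_NormedModule). auto_derive. exact I.
  - rewrite Rmult_1_r, Rmult_0_r, cos_w, cos_0. field. exact w_neq0.
Qed.

End Antiderivative.

Lemma fourier_const_0 : fourier_cos (fun _ => 0) w = 0 /\ fourier_sin (fun _ => 0) w = 0.
Proof.
  unfold fourier_cos, fourier_sin.
  split; rewrite (RInt_ext _ (fun _ => 0)), RInt_const;
    [apply Rmult_0_r | intros x _; apply Rmult_0_l | apply Rmult_0_r | intros x _; apply Rmult_0_l].
Qed.

Lemma fourier_bern_poly_0 :
  fourier_cos (bern_poly 0) w = 0 /\ fourier_sin (bern_poly 0) w = 0.
Proof.
  assert (D0 : forall x, is_derive (bern_poly 0) x 0).
  { intros x. apply (is_derive_ext (fun _ => 1)); [intros; now rewrite bern_poly_0|].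
    auto_derive; [exact I | reflexivity]. }
  assert (C0 : forall x : R, continuous (fun _ : R => 0) x) by (intros; apply continuous_const).
  rewrite (fourier_cos_antiderivative _ (fun _ => 0) D0 C0),
    (fourier_sin_antiderivative _ (fun _ => 0) D0 C0).
  destruct fourier_const_0 as [-> ->]. rewrite !bern_poly_0. split; field; exact w_neq0.
Qed.

Lemma fourier_bern_poly_S n :
  fourier_cos (bern_poly (S n)) w = - fourier_sin (bern_poly n) w / w /\
  fourier_sin (bern_poly (S n)) w
    = (fourier_cos (bern_poly n) w - (bern_poly (S n) 1 - bern_poly (S n) 0)) / w.
Proof.
  split; [apply fourier_cos_antiderivative | apply fourier_sin_antiderivative];
    intros x; apply is_derive_bern_poly || apply continuous_bern_poly.
Qed.

Lemma fourier_bern_poly_norm k :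
  fourier_cos (bern_poly (S k)) w ^ 2 + fourier_sin (bern_poly (S k)) w ^ 2 = / w ^ (2 * S k).
Proof.
  induction k as [|k IH].
  - destruct (fourier_bern_poly_S 0) as [-> ->], fourier_bern_poly_0 as [-> ->].
    rewrite !bern_poly_1. change (2 * 1)%nat with 2%nat. field. exact w_neq0.
  - destruct (fourier_bern_poly_S (S k)) as [-> ->].
    rewrite bern_poly_at_1, bern_poly_at_0, Rminus_diag by lia.
    replace (2 * S (S k))%nat with (2 + 2 * S k)%nat by lia.
    rewrite pow_add, Rinv_mult, <- IH. field. exact w_neq0.
Qed.

End FourierCoefficients.

(** * Bessel's inequality *)

Lemma sum_f_R0_kronecker (a : nat -> R) j N : (j <= N)%nat ->
  sum_f_R0 (fun i => if Nat.eqb i j then a i else 0) N = a j.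
Proof.
  induction N as [|N IH]; intros Hj.
  - replace j with 0%nat by lia. reflexivity.
  - rewrite tech5. destruct (Nat.eq_dec j (S N)) as [->|Hne].
    + rewrite Nat.eqb_refl, sum_eq_R0; [ring|].
      intros i Hi. rewrite (proj2 (Nat.eqb_neq i (S N))) by lia. reflexivity.
    + rewrite (proj2 (Nat.eqb_neq (S N) j)) by lia. rewrite IH by lia. ring.
Qed.

Section Bessel.

Variables (g : nat -> R -> R) (nu : nat -> R).
Hypothesis nu_neq0 : forall i, nu i <> 0.
Hypothesis g_orth :
  forall i j, is_RInt (fun x => g i x * g j x) 0 1 (if Nat.eqb i j then nu i else 0).
Variables (f : R -> R) (c : nat -> R) (V : R).
Hypothesis f_coef : forall i, is_RInt (fun x => f x * g i x) 0 1 (c i).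
Hypothesis f_sq : is_RInt (fun x => f x ^ 2) 0 1 V.

Let approx (N : nat) (x : R) : R := sum_f_R0 (fun i => c i / nu i * g i x) N.

Lemma is_RInt_approx_mul_g N j : (j <= N)%nat ->
  is_RInt (fun x => approx N x * g j x) 0 1 (c j).
Proof.
  intros Hj. eapply is_RInt_ext_eq.
  - apply (is_RInt_sum_f_R0 (fun i x => c i / nu i * (g i x * g j x))).
    intros i _. apply is_RInt_Rmult_l, g_orth.
  - intros x. unfold approx. rewrite Rmult_comm, scal_sum. apply sum_eq. intros i _. ring.
  - rewrite <- (sum_f_R0_kronecker c j N Hj). apply sum_eq. intros i _.
    destruct (Nat.eqb i j); [field; apply nu_neq0 | ring].
Qed.

Theorem bessel_inequality N : sum_f_R0 (fun i => c i ^ 2 / nu i) N <= V.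
Proof.
  set (S := sum_f_R0 (fun i => c i ^ 2 / nu i) N).
  assert (Hf_approx : is_RInt (fun x => f x * approx N x) 0 1 S).
  { eapply is_RInt_ext_eq.
    - apply (is_RInt_sum_f_R0 (fun i x => c i / nu i * (f x * g i x))).
      intros i _. apply is_RInt_Rmult_l, f_coef.
    - intros x. unfold approx. rewrite scal_sum. apply sum_eq. intros i _. ring.
    - apply sum_eq. intros i _. field. apply nu_neq0. }
  assert (Happrox_sq : is_RInt (fun x => approx N x * approx N x) 0 1 S).
  { eapply is_RInt_ext_eq.
    - apply (is_RInt_sum_f_R0 (fun i x => c i / nu i * (approx N x * g i x))).
      intros i Hi. apply is_RInt_Rmult_l, is_RInt_approx_mul_g, Hi.
    - intros x.
      transitivity (approx N x * sum_f_R0 (fun i => c i / nu i * g i x) N); [|reflexivity].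
      rewrite scal_sum. apply sum_eq. intros i _. ring.
    - apply sum_eq. intros i _. field. apply nu_neq0. }
  assert (Hdist : is_RInt (fun x => (f x - approx N x) ^ 2) 0 1 (V - 2 * S + S)).
  { eapply is_RInt_ext_eq.
    - apply is_RInt_Rplus; [apply is_RInt_Rplus | exact Happrox_sq].
      + exact f_sq.
      + exact (is_RInt_Rmult_l _ 0 1 (-2) _ Hf_approx).
    - intros x. simpl. ring.
    - ring. }
  assert (0 <= V - 2 * S + S).
  { apply (is_RInt_ge_0 _ 0 1 _ ltac:(lra) Hdist). intros x _. apply pow2_ge_0. }
  lra.
Qed.

End Bessel.

Lemma is_RInt_mul_harmonic_fourier (f : R -> R) (w : R) : (forall x, continuous f x) ->
  is_RInt (fun x => f x * harmonic (fourier_cos f w) (fourier_sin f w) w x) 0 1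
    (fourier_cos f w ^ 2 + fourier_sin f w ^ 2).
Proof.
  intros Hf. eapply is_RInt_ext_eq.
  - apply is_RInt_Rplus.
    + exact (is_RInt_Rmult_l _ 0 1 (fourier_cos f w) _ (is_RInt_fourier_cos w f Hf)).
    + exact (is_RInt_Rmult_l _ 0 1 (fourier_sin f w) _ (is_RInt_fourier_sin w f Hf)).
  - intros x. cbv beta. unfold harmonic. ring.
  - ring.
Qed.

Definition freq (m : nat) : R := 2 * PI * INR (S m).

Lemma freq_pos m : 0 < freq m.
Proof.
  pose proof PI_RGT_0. apply Rmult_lt_0_compat; [lra | apply lt_0_INR; lia].
Qed.

Lemma sin_freq m : sin (freq m) = 0.
Proof.
  unfold freq. replace (2 * PI * INR (S m)) with (0 + 2 * INR (S m) * PI) by ring.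
  rewrite sin_period. apply sin_0.
Qed.

Lemma cos_freq m : cos (freq m) = 1.
Proof.
  unfold freq. replace (2 * PI * INR (S m)) with (0 + 2 * INR (S m) * PI) by ring.
  rewrite cos_period. apply cos_0.
Qed.

Lemma freq_sq_inj i j : i <> j -> freq i * freq i <> freq j * freq j.
Proof.
  intros Hij E. apply Hij, eq_add_S, INR_eq.
  apply (Rmult_eq_reg_l (2 * PI)); [|pose proof PI_RGT_0; lra].
  apply Rsqr_inj; [apply Rlt_le, freq_pos .. | exact E].
Qed.

Lemma is_RInt_harmonic_freq (a b : nat -> R) i j :
  is_RInt (fun x => harmonic (a i) (b i) (freq i) x * harmonic (a j) (b j) (freq j) x) 0 1
    (if Nat.eqb i j then (a i ^ 2 + b i ^ 2) / 2 else 0).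
Proof.
  destruct (Nat.eqb_spec i j) as [<-|Hij].
  - eapply is_RInt_ext_eq; [| reflexivity |].
    + apply is_RInt_harmonic_mul_same;
        [apply sin_freq | apply cos_freq | apply Rgt_not_eq, freq_pos].
    + f_equal. ring.
  - apply is_RInt_harmonic_mul_orth; [apply sin_freq | apply cos_freq | apply sin_freq
                                      | apply cos_freq | apply freq_sq_inj, Hij].
Qed.

Lemma bessel_bern_poly q N :
  sum_f_R0 (fun m => 2 / freq m ^ (2 * S q)) N <= Rabs (bern_coef (2 * S q)).
Proof.
  set (a m := fourier_cos (bern_poly (S q)) (freq m)).
  set (b m := fourier_sin (bern_poly (S q)) (freq m)).
  assert (Hnorm : forall m, a m ^ 2 + b m ^ 2 = / freq m ^ (2 * S q)).
  { intros m. exact (fourier_bern_poly_norm (freq m) (Rgt_not_eq _ _ (freq_pos m))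
                       (sin_freq m) (cos_freq m) q). }
  assert (Hnu : forall m, (a m ^ 2 + b m ^ 2) / 2 <> 0).
  { intros m. rewrite Hnorm. apply Rmult_integral_contrapositive. split; [|lra].
    apply Rinv_neq_0_compat, pow_nonzero, Rgt_not_eq, freq_pos. }
  assert (Hsq : is_RInt (fun x => bern_poly (S q) x ^ 2) 0 1 ((-1) ^ q * bern_coef (2 * S q))).
  { eapply is_RInt_ext_eq.
    - apply (is_RInt_bern_poly_mul q (S q)). lia.
    - intros x. cbv beta. ring.
    - do 2 f_equal. lia. }
  eapply Rle_trans; [| eapply Rle_trans;
    [exact (bessel_inequality _ _ Hnu (is_RInt_harmonic_freq a b) (bern_poly (S q)) _ _
              (fun m => is_RInt_mul_harmonic_fourier _ (freq m) (continuous_bern_poly (S q)))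
              Hsq N) |]].
  - right. apply sum_eq. intros m _. fold (a m) (b m). rewrite Hnorm. field.
    apply pow_nonzero, Rgt_not_eq, freq_pos.
  - eapply Rle_trans; [apply Rle_abs|]. rewrite Rabs_mult, pow_1_abs. lra.
Qed.

(** * Partial sums of [ζ(2k)] *)

Definition zeta_term (k m : nat) : R := / INR m ^ (2 * k).

Lemma zeta_term_1 k : zeta_term k 1 = 1.
Proof. unfold zeta_term. rewrite pow1. apply Rinv_1. Qed.

Lemma zeta_term_pos k m : (0 < m)%nat -> 0 < zeta_term k m.
Proof. intros Hm. apply Rinv_0_lt_compat, pow_lt, lt_0_INR, Hm. Qed.

Lemma zeta_term_mul k m n : zeta_term k (m * n) = zeta_term k m * zeta_term k n.
Proof. unfold zeta_term. rewrite mult_INR, Rpow_mult_distr. apply Rinv_mult. Qed.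

Lemma zeta_term_le k m n : (1 <= k)%nat -> (0 < m <= n)%nat ->
  zeta_term k n <= zeta_term k m * (INR m / INR n) ^ 2.
Proof.
  intros Hk [Hm Hmn].
  assert (Hm' : 0 < INR m) by now apply lt_0_INR.
  assert (Hn' : 0 < INR n) by (apply lt_0_INR; lia).
  assert (Hr : 1 <= INR n / INR m).
  { apply (Rmult_le_reg_r (INR m)); [exact Hm'|]. field_simplify; [|lra]. now apply le_INR. }
  assert (Hpow : (INR n / INR m) ^ 2 <= (INR n / INR m) ^ (2 * k)) by (apply Rle_pow; lia || lra).
  unfold zeta_term.
  replace (/ INR n ^ (2 * k)) with (/ INR m ^ (2 * k) * / (INR n / INR m) ^ (2 * k))
    by (rewrite <- Rinv_mult, <- Rpow_mult_distr; f_equal; f_equal; field; lra).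
  replace ((INR m / INR n) ^ 2) with (/ (INR n / INR m) ^ 2)
    by (rewrite <- pow_inv; f_equal; field; split; lra).
  apply Rmult_le_compat_l; [apply Rlt_le, Rinv_0_lt_compat, pow_lt; lra|].
  apply Rinv_le_contravar; [apply pow_lt; lra | exact Hpow].
Qed.

Lemma zeta_term_le_inv_sq k m : (1 <= k)%nat -> (0 < m)%nat -> zeta_term k m <= / INR m ^ 2.
Proof.
  intros Hk Hm. eapply Rle_trans; [apply (zeta_term_le k 1 m); lia|].
  rewrite zeta_term_1, Rmult_1_l. simpl INR. right. unfold Rdiv. rewrite Rmult_1_l. apply pow_inv.
Qed.

(* In terms of [x, y, z, u = 2^(-2k), 3^(-2k), 5^(-2k), 7^(-2k)] the last factor is
   [Σ_(m<=8) m^(-2k)]; expanded, the product is [1 + z + u] minus [(x + y) (z + u) + x^2 y +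
   x^4 + y^2] plus nonnegative terms, and the hypotheses let [z] and [u] absorb the
   negative ones. *)
Lemma euler_factor_poly_bound (x y z u : R) :
  0 < x <= / 4 -> 0 < y <= / 9 -> 0 < z -> 0 < u ->
  y * y <= 49 / 81 * u -> x * x * y <= 25 / 144 * z -> x * x * (x * x) <= 25 / 256 * z ->
  1 < (1 - x) * (1 - y) * (1 + x + y + x * x + z + x * y + u + x * (x * x)).
Proof.
  intros Hx Hy Hz Hu H9 H12 H16.
  assert (0 <= (/ 4 - x) * z) by (apply Rmult_le_pos; lra).
  assert (0 <= (/ 9 - y) * z) by (apply Rmult_le_pos; lra).
  assert (0 <= (/ 4 - x) * u) by (apply Rmult_le_pos; lra).
  assert (0 <= (/ 9 - y) * u) by (apply Rmult_le_pos; lra).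
  assert (0 <= x * y * z) by (repeat apply Rmult_le_pos; lra).
  assert (0 <= x * y * u) by (repeat apply Rmult_le_pos; lra).
  assert (0 <= x * x * y * y) by (repeat apply Rmult_le_pos; lra).
  assert (0 <= x * x * (x * x) * y) by (repeat apply Rmult_le_pos; lra).
  lra.
Qed.

Lemma euler_factor_lt_zeta_partial k : (1 <= k)%nat ->
  / ((1 - zeta_term k 2) * (1 - zeta_term k 3)) < sum_f_R0 (fun m => zeta_term k (S m)) 7.
Proof.
  intros Hk.
  assert (Hx : zeta_term k 2 <= / 4)
    by (generalize (zeta_term_le_inv_sq k 2 Hk ltac:(lia)); simpl; lra).
  assert (Hy : zeta_term k 3 <= / 9)
    by (generalize (zeta_term_le_inv_sq k 3 Hk ltac:(lia)); simpl; lra).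
  assert (H9 : zeta_term k 9 <= 49 / 81 * zeta_term k 7)
    by (eapply Rle_trans; [apply (zeta_term_le k 7 9); lia | simpl; lra]).
  assert (H12 : zeta_term k 12 <= 25 / 144 * zeta_term k 5)
    by (eapply Rle_trans; [apply (zeta_term_le k 5 12); lia | simpl; lra]).
  assert (H16 : zeta_term k 16 <= 25 / 256 * zeta_term k 5)
    by (eapply Rle_trans; [apply (zeta_term_le k 5 16); lia | simpl; lra]).
  assert (E4 : zeta_term k 4 = zeta_term k 2 * zeta_term k 2) by exact (zeta_term_mul k 2 2).
  assert (E6 : zeta_term k 6 = zeta_term k 2 * zeta_term k 3) by exact (zeta_term_mul k 2 3).
  assert (E8 : zeta_term k 8 = zeta_term k 2 * zeta_term k 4) by exact (zeta_term_mul k 2 4).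
  assert (E9 : zeta_term k 9 = zeta_term k 3 * zeta_term k 3) by exact (zeta_term_mul k 3 3).
  assert (E12 : zeta_term k 12 = zeta_term k 4 * zeta_term k 3) by exact (zeta_term_mul k 4 3).
  assert (E16 : zeta_term k 16 = zeta_term k 4 * zeta_term k 4) by exact (zeta_term_mul k 4 4).
  rewrite E9 in H9. rewrite E12, E4 in H12. rewrite E16, E4 in H16.
  simpl sum_f_R0. rewrite zeta_term_1, E8, E6, E4.
  assert (Hden : 0 < (1 - zeta_term k 2) * (1 - zeta_term k 3))
    by (apply Rmult_lt_0_compat; lra).
  apply (Rmult_lt_reg_l _ _ _ Hden). rewrite Rinv_r by lra.
  apply euler_factor_poly_bound; try split; try (apply zeta_term_pos; lia); assumption.
Qed.

Lemma zeta_term_lt_1 k m : (1 <= k)%nat -> (2 <= m)%nat -> zeta_term k m < 1.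
Proof.
  intros Hk Hm. eapply Rle_lt_trans; [apply zeta_term_le_inv_sq; lia|].
  assert (H2 : 2 <= INR m) by (apply (le_INR 2) in Hm; simpl in Hm; lra).
  rewrite <- Rinv_1. apply Rinv_lt_contravar; [|simpl]; nra.
Qed.

Lemma inv_zeta_term_le_pow k m (a : R) : INR m <= a -> / zeta_term k m <= a ^ (2 * k).
Proof.
  intros Hma. unfold zeta_term. rewrite Rinv_inv.
  apply pow_incr. split; [apply pos_INR | exact Hma].
Qed.

Lemma inv_freq_pow k m : / freq m ^ (2 * k) = / (2 * PI) ^ (2 * k) * zeta_term k (S m).
Proof. unfold freq, zeta_term. rewrite Rpow_mult_distr. apply Rinv_mult. Qed.

Lemma zeta_partial_le_abs_bern_coef q N :
  2 / (2 * PI) ^ (2 * S q) * sum_f_R0 (fun m => zeta_term (S q) (S m)) N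
  <= Rabs (bern_coef (2 * S q)).
Proof.
  eapply Rle_trans; [right | apply (bessel_bern_poly q N)].
  rewrite scal_sum. apply sum_eq. intros m _.
  unfold Rdiv. rewrite inv_freq_pow. ring.
Qed.

Lemma euler_factor_lt_abs_bern_coef q :
  2 / (PI ^ (2 * S q) * (2 ^ (2 * S q) - 1)) / (1 - zeta_term (S q) 3)
  < Rabs (bern_coef (2 * S q)).
Proof.
  set (x := zeta_term (S q) 2). set (y := zeta_term (S q) 3).
  set (T := 2 / (2 * PI) ^ (2 * S q)).
  assert (Hx : x < 1) by (apply zeta_term_lt_1; lia).
  assert (Hy : y < 1) by (apply zeta_term_lt_1; lia).
  assert (HT : 0 < T)
    by (apply Rdiv_lt_0_compat, pow_lt; [lra | pose proof PI_RGT_0; lra]).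
  replace (2 / (PI ^ (2 * S q) * (2 ^ (2 * S q) - 1)) / (1 - y))
    with (T * / ((1 - x) * (1 - y))).
  - eapply Rlt_le_trans; [| apply (zeta_partial_le_abs_bern_coef q 7)].
    apply Rmult_lt_compat_l; [exact HT | apply euler_factor_lt_zeta_partial; lia].
  - assert (H2 : 1 < 2 ^ (2 * S q)) by (apply Rlt_pow_R1; [lra | lia]).
    assert (HPI : 0 < PI ^ (2 * S q)) by (apply pow_lt, PI_RGT_0).
    unfold T, x, zeta_term. simpl INR. rewrite Rpow_mult_distr.
    replace (1 + 1) with 2 by ring. field. lra.
Qed.

Lemma div_pred_le_inv_one_sub (A y : R) : 0 < y < 1 -> / y <= A -> A / (A - 1) <= / (1 - y).
Proof.
  intros Hy HA.
  assert (HyA : 1 <= y * A).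
  { apply (Rmult_le_compat_l y) in HA; [|lra]. rewrite Rinv_r in HA; lra. }
  assert (HA1 : 1 < A) by nra.
  apply (Rmult_le_reg_r ((A - 1) * (1 - y))); [apply Rmult_lt_0_compat; lra|].
  field_simplify; lra.
Qed.

Theorem corollary2p4 (a : R) (k : nat) (ha : 3 <= a) (hk : (1 <= k)%nat) :
  2 * INR (Factorial.fact (2 * k)) / (PI ^ (2 * k) * (2 ^ (2 * k) - 1))
    * (a ^ (2 * k) / (a ^ (2 * k) - 1))
  < Rabs (bernoulli (2 * k)).
Proof.
  destruct k as [|q]; [lia|].
  set (y := zeta_term (S q) 3).
  set (E := 2 / (PI ^ (2 * S q) * (2 ^ (2 * S q) - 1))).
  assert (Hy : 0 < y < 1) by (split; [apply zeta_term_pos | apply zeta_term_lt_1]; lia).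
  assert (HA : / y <= a ^ (2 * S q)) by (apply inv_zeta_term_le_pow; simpl; lra).
  assert (HF : 0 < INR (fact (2 * S q))) by apply INR_fact_lt_0.
  assert (HE : 0 < E).
  { assert (H2 : 1 < 2 ^ (2 * S q)) by (apply Rlt_pow_R1; [lra | lia]).
    apply Rdiv_lt_0_compat, Rmult_lt_0_compat; [lra | apply pow_lt, PI_RGT_0 | lra]. }
  rewrite bernoulli_bern_coef, Rabs_mult, (Rabs_pos_eq (INR _)) by lra.
  replace (2 * INR (fact (2 * S q)) / (PI ^ (2 * S q) * (2 ^ (2 * S q) - 1)))
    with (INR (fact (2 * S q)) * E) by (unfold E, Rdiv; ring).
  apply (Rle_lt_trans _ (INR (fact (2 * S q)) * (E / (1 - y)))).
  - rewrite Rmult_assoc. apply Rmult_le_compat_l; [lra|].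
    apply Rmult_le_compat_l; [lra | apply div_pred_le_inv_one_sub; assumption].
  - apply Rmult_lt_compat_l; [exact HF | apply euler_factor_lt_abs_bern_coef].
Qed.
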